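(* Let $b,k>0$, $0<c<1$, $R_0>0$, $\bar\varrho>0$ be constants. Let $\mathring\varrho,\mathring n,\mathring\Pi$ be functions on $\mathbb{R}^3$ with $\mathring\varrho+p(\mathring\varrho,\mathring n)+\mathring\Pi>0$, and let $\mathbf u_1$ be a smooth vector field supported in $B_{R_0}$ with $$\int_{B_{R_0}}\mathbf x\cdot\mathbf u_1|\mathbf u_1|(\mathring\varrho+\mathring p+\mathring\Pi)\,dx>R_0\frac{(c+1)^2}{2(c^2+1)}\int_{B_{R_0}}|\mathbf u_1|^2(\mathring\varrho+\mathring p+\mathring\Pi)\,dx,$$ where $\mathring p=p(\mathring\varrho,\mathring n)$. For $\sigma>0$ set $\mathring{\mathbf u}=\sigma\mathbf u_1$, $E=\int_{B_{R_0}}\big((\mathring\varrho+\mathring p+\mathring\Pi)|\mathring{\mathbf u}|^2+\mathring\varrho-\bar\varrho\big)dx$ and $Q(0)=\int_{B_{R_0}}\mathbf x\cdot\mathring{\mathbf u}\sqrt{1+|\mathring{\mathbf u}|^2}(\mathring\varrho+\mathring p+\mathring\Pi)\,dx$. Then there exists $\bar R>R_0$ such that for all sufficiently large $\sigma>0$, with $A=c\big(1+\frac{3b\bar R^3}{E+b\bar R^3}\big)$, $B=\frac{k\bar R^3}{E+b\bar R^3}$ and $z_0=\frac{A(1-B)+\sqrt{A^2+2B-B^2}}{A^2+1}$, the following hold: $A^2+2B-B^2>0$, $A+B<1$, $z_0<1$, $\int_{\frac12+\frac{z_0}2}^1\frac{dz}{1-\sqrt{1-z^2}-Az-B}<\log(\bar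 R/R_0)$, and $\frac{Q(0)}{R_0(E+bR_0^3)}>\frac{z_0}2+\frac12$.
   Context: $B_R=\{x\in\mathbb{R}^3:|x|<R\}$; $p=p(\varrho,n)$ is a given pressure function (equation of state). *)

From HB Require Import structures.
From mathcomp Require Import all_boot all_order all_algebra.
From mathcomp Require Import all_classical all_reals all_analysis.
Set Implicit Arguments. Unset Strict Implicit. Unset Printing Implicit Defensive.
Import Order.TTheory GRing.Theory Num.Theory.
Import numFieldNormedType.Exports.
Local Open Scope classical_set_scope.
Local Open Scope ring_scope.

Definition R3 (R : realType) := (R * R * R)%type.

Definition dot3 {R : realType} (x y : R3 R) : R :=
  x.1.1 * y.1.1 + x.1.2 * y.1.2 + x.2 * y.2.

Definition enorm3 {R : realType} (x : R3 R) : R := Num.sqrt (dot3 x x).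

Definition ball3 {R : realType} (r : R) : set (R3 R) := [set x | enorm3 x < r].

Definition leb3 (R : realType) :=
  (((@lebesgue_measure R) \x (@lebesgue_measure R))%E \x (@lebesgue_measure R))%E.

Fixpoint iterD {R : realType} {V W : normedModType R} (vs : seq V) (f : V -> W)
  : V -> W :=
  match vs with
  | [::] => f
  | v :: vs' => fun x => 'D_v (iterD vs' f) x
  end.

Definition smooth {R : realType} {V W : normedModType R} (f : V -> W) : Prop :=
  forall (vs : seq V) (x : V), differentiable (iterD vs f) x.

Definition supported_in {R : realType} (u : R3 R -> R3 R) (S : set (R3 R)) :=
  closure [set x | u x != 0] `<=` S.
Arguments leb3 : clear implicits.

(* Write w = rho + p + Pi, I2 = int |u1|^2 w and J = int x.u1 |u1| w over B_R0.
   For u = sigma u1 the energy is E = sigma^2 I2 + O(1), and since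
   sqrt (1 + t^2) >= t the momentum satisfies Q(0) >= sigma^2 J - O(sigma);
   by Cauchy-Schwarz J <= R0 I2, so I2 > 0.  As sigma -> oo we get A -> c and
   B -> 0, hence z0 -> 2c/(c^2+1), and z0/2 + 1/2 tends to
   (c+1)^2/(2(c^2+1)) < J/(R0 I2), the limit of Q(0)/(R0 (E + b R0^3)).
   On [(1+z0)/2, 1] the denominator 1 - sqrt (1 - z^2) - A z - B is at least
   (z - z0)^2/2 >= (1 - z0)^2/8, which bounds the integral by a constant M
   uniformly in large sigma; Rbar = R0 exp (M + 1) then works. *)

From HB Require Import structures.
From mathcomp Require Import all_boot all_order all_algebra.
From mathcomp Require Import all_classical all_reals all_analysis.
From mathcomp Require Import ring lra measurable_realfun.
Set Implicit Arguments.
Unset Strict Implicit.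
Unset Printing Implicit Defensive.
Import Order.TTheory GRing.Theory Num.Theory.
Import numFieldNormedType.Exports.
Local Open Scope classical_set_scope.
Local Open Scope ring_scope.

Section Denominator.
Variable R : realType.
Implicit Types A B z : R.

Definition denom A B z : R := 1 - Num.sqrt (1 - z ^+ 2) - A * z - B.

(* The larger root of [denom A B]: squaring [1 - B - A z = sqrt (1 - z^2)] gives
   [(A^2 + 1) z^2 - 2 A (1 - B) z + B^2 - 2 B = 0]. *)
Definition denom_root A B : R :=
  (A * (1 - B) + Num.sqrt (A ^+ 2 + 2 * B - B ^+ 2)) / (A ^+ 2 + 1).

Lemma continuous_denom A B : continuous (denom A B).
Proof.
move=> x; apply: cvgB; last exact: cvg_cst.
apply: cvgB; last by apply: cvgM; [exact: cvg_cst | exact: cvg_id].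
apply: cvgB; first exact: cvg_cst.
apply: continuous_comp; last exact: sqrt_continuous.
by apply: cvgB; [exact: cvg_cst | apply: cvgM; exact: cvg_id].
Qed.

Lemma denom_root_ge0 A B : 0 <= A -> B <= 1 -> 0 <= denom_root A B.
Proof.
move=> A0 B1; have {}B1 : 0 <= 1 - B by lra.
by rewrite divr_ge0 ?addr_ge0 ?mulr_ge0 ?sqrtr_ge0 ?sqr_ge0.
Qed.

Variables A B : R.

Lemma denom_ge_sqr z : 0 <= A -> 0 <= B -> A + B < 1 ->
  0 < A ^+ 2 + 2 * B - B ^+ 2 -> denom_root A B <= z <= 1 ->
  (z - denom_root A B) ^+ 2 / 2 <= denom A B z.
Proof.
move=> A0 B0 AB disc /andP[z0z z1].
have z00 : 0 <= denom_root A B by apply: denom_root_ge0; lra.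
move: z0z z00; rewrite /denom_root.
set s := Num.sqrt _; set z0 := _ / _ => z0z z00.
have s0 : 0 <= s by exact: sqrtr_ge0.
have s2 : s ^+ 2 = A ^+ 2 + 2 * B - B ^+ 2 by rewrite sqr_sqrtr // ltW.
have A21 : 0 < A ^+ 2 + 1 by nra.
have z0E : A * (1 - B) = z0 * (A ^+ 2 + 1) - s by rewrite mulfVK ?gt_eqF //; ring.
set S := Num.sqrt (1 - z ^+ 2).
have S0 : 0 <= S by exact: sqrtr_ge0.
have S2 : S ^+ 2 = 1 - z ^+ 2 by rewrite sqr_sqrtr //; nra.
set P := 1 - B - A * z.
have P0 : 0 < P by rewrite /P; nra.
have P1 : P <= 1 by rewrite /P; nra.
(* [P^2 - S^2] is [A^2 + 1] times the product of the distances to both roots *)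
have factor : (A ^+ 2 + 1) * (P ^+ 2 - S ^+ 2) =
    ((A ^+ 2 + 1) * (z - z0)) * ((A ^+ 2 + 1) * (z - z0) + 2 * s).
  rewrite S2 /P; transitivity (((A ^+ 2 + 1) * z - A * (1 - B)) ^+ 2 - s ^+ 2).
    by rewrite s2; ring.
  by rewrite z0E; ring.
have gap : (z - z0) ^+ 2 <= P ^+ 2 - S ^+ 2.
  rewrite -(ler_pM2l A21) factor.
  have := mulr_ge0 s0 (mulr_ge0 (ltW A21) (ltac:(lra) : 0 <= z - z0)).
  have := mulr_ge0 (sqr_ge0 A) (sqr_ge0 (z - z0)); nra.
have S1 : S <= 1 by nra.
have SP : S <= P by nra.
have -> : denom A B z = P - S by rewrite /denom -/S /P; ring.
nra.
Qed.

Lemma denom_inv_integrable_le : 0 <= A -> 0 <= B -> A + B < 1 ->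
  0 < A ^+ 2 + 2 * B - B ^+ 2 -> denom_root A B < 1 ->
  let a := 1 / 2 + denom_root A B / 2 in
  (@lebesgue_measure R).-integrable `[a, 1] (fun z => (1 / denom A B z)%:E) /\
  \int[@lebesgue_measure R]_(z in `[a, 1]) (1 / denom A B z)
    <= 8 / (1 - denom_root A B) ^+ 2.
Proof.
move=> A0 B0 AB disc z01.
have z00 : 0 <= denom_root A B by apply: denom_root_ge0; lra.
set z0 := denom_root A B in z01 z00 * => a.
set eta := (1 - z0) ^+ 2 / 8.
have eta0 : 0 < eta by rewrite divr_gt0 //; nra.
have denom_ge : forall z, a <= z <= 1 -> eta <= denom A B z.
  move=> z /andP[az z1]; rewrite /a in az.
  have := denom_ge_sqr (z := z) A0 B0 AB disc; rewrite -/z0 z1 andbT.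
  move=> /(_ ltac:(lra)); apply: le_trans.
  have : ((1 - z0) / 2) ^+ 2 <= (z - z0) ^+ 2 by rewrite ler_sqr ?nnegrE; lra.
  rewrite /eta; lra.
have mI : measurable (`[a, 1] : set R) by exact: measurable_itv.
(* on [[a, 1]] the integrand agrees with the continuous [h] *)
pose h z := (Num.max (denom A B z) eta)^-1.
have hc : continuous h.
  move=> x; apply: (continuousV (s := fun z => Num.max (denom A B z) eta)).
    by rewrite gt_eqF // (lt_le_trans eta0) // le_max lexx orbT.
  exact: continuous_max (@continuous_denom A B x) (@cvg_cst _ _ _ _ _).
have hE : {in `[a, 1]%classic, h =1 fun z => 1 / denom A B z}.
  by move=> z; rewrite inE /= in_itv /= => /denom_ge Hz; rewrite /h max_l // div1r.
have gint : (@lebesgue_measure R).-integrable `[a, 1] (fun z => (1 / denom A B z)%:E).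
  apply: (@eq_integrable _ _ _ (@lebesgue_measure R) _ mI (EFin \o h)).
    by move=> z /hE /= ->.
  apply: continuous_compact_integrable; first exact: segment_compact.
  exact: continuous_subspaceT.
split => //.
have cint : (@lebesgue_measure R).-integrable `[a, 1] (EFin \o cst (8 / (1 - z0) ^+ 2)).
  apply: continuous_compact_integrable; first exact: segment_compact.
  by apply: continuous_subspaceT => x; exact: cvg_cst.
apply: le_trans (le_Rintegral _ gint cint _) _ => //.
  move=> z; rewrite /= in_itv /= => /denom_ge Hz.
  have -> : 8 / (1 - z0) ^+ 2 = 1 / eta by rewrite /eta div1r invf_div.
  by rewrite !div1r lef_pV2 ?posrE // (lt_le_trans eta0).
rewrite Rintegral_cst //= lebesgue_measure_itv /=.
have M0 : 0 <= 8 / (1 - z0) ^+ 2 by rewrite divr_ge0 // sqr_ge0.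
have a0 : 0 <= a by rewrite /a; lra.
by case: ifP => _ /=; rewrite ?mulr0 //; nra.
Qed.

End Denominator.

Section Asymptotics.
Variable R : realType.

Lemma denom_root_le_perturbed (A B c del : R) : 0 < c ->
  c <= A <= c + del -> 0 <= B <= del -> del <= 1 ->
  0 < A ^+ 2 + 2 * B - B ^+ 2 /\
  denom_root A B <= 2 * c / (c ^+ 2 + 1) + del * (2 + 1 / c).
Proof.
move=> c0 /andP[cA Ac] /andP[B0 Bd] d1.
have disc0 : 0 < A ^+ 2 + 2 * B - B ^+ 2 by nra.
split => //; rewrite /denom_root.
set sq := Num.sqrt _.
have sq0 : 0 <= sq by exact: sqrtr_ge0.
have sq2 : sq ^+ 2 = A ^+ 2 + 2 * B - B ^+ 2 by rewrite sqr_sqrtr // ltW.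
set t := del / c.
have t0 : 0 <= t by rewrite divr_ge0 //; lra.
have dt : del = c * t by rewrite mulrC mulfVK // gt_eqF.
have sq_le : sq <= c + del + t.
  have disc_le : sq ^+ 2 <= (c + del + t) ^+ 2.
    have : A ^+ 2 <= (c + del) ^+ 2 by rewrite ler_sqr ?nnegrE; lra.
    have := mulr_ge0 t0 (ltW c0); have := mulr_ge0 t0 t0; nra.
  have : 0 <= c + del + t by lra.
  nra.
have c21 : 0 < c ^+ 2 + 1 by nra.
have -> : del * (2 + 1 / c) = 2 * del + t by rewrite /t; field; apply/eqP; lra.
rewrite ler_pdivrMr; last by nra.
have : 2 * c / (c ^+ 2 + 1) * (c ^+ 2 + 1) = 2 * c by rewrite mulfVK // gt_eqF.
have : 0 <= 2 * c / (c ^+ 2 + 1) by rewrite divr_ge0 //; nra.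
set zl := 2 * c / (c ^+ 2 + 1) => zl0 zlE.
have := mulr_ge0 zl0 (ltac:(nra) : 0 <= A ^+ 2 - c ^+ 2).
have := mulr_ge0 (ltac:(lra) : 0 <= 2 * del + t) (sqr_ge0 A).
nra.
Qed.

Lemma coefs_near_limit (b k c Rb E del : R) :
  0 < b -> 0 < k -> 0 < c -> c <= 1 -> 0 < Rb -> 0 < del ->
  (3 * b + k) * Rb ^+ 3 <= del * E ->
  let A := c * (1 + 3 * b * Rb ^+ 3 / (E + b * Rb ^+ 3)) in
  let B := k * Rb ^+ 3 / (E + b * Rb ^+ 3) in
  c <= A <= c + del /\ 0 <= B <= del.
Proof.
move=> b0 k0 c0 c1 Rb0 del0 hE A B.
have bR : 0 < b * Rb ^+ 3 by rewrite mulr_gt0 // exprn_gt0.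
have kR : 0 < k * Rb ^+ 3 by rewrite mulr_gt0 // exprn_gt0.
have E0 : 0 < E by rewrite -(pmulr_rgt0 _ del0); nra.
have W0 : 0 < E + b * Rb ^+ 3 by lra.
set u := 3 * b * Rb ^+ 3 / (E + b * Rb ^+ 3).
have u0 : 0 <= u by rewrite divr_ge0 ?ltW //; nra.
have u_le : u <= del by rewrite ler_pdivrMr //; nra.
have cu : c * u <= u by rewrite ler_piMl.
have -> : A = c + c * u by rewrite /A /u; ring.
have B0 : 0 <= B by rewrite divr_ge0 ?ltW.
have B_le : B <= del by rewrite ler_pdivrMr //; nra.
by rewrite B0 B_le; split => //; apply/andP; split; nra.
Qed.

Lemma quadratic_eventually_gt (a b c : R) : 0 < a ->
  exists S, forall s, S < s -> b * s + c < a * s ^+ 2.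
Proof.
move=> a0; exists (1 + (`|b| + `|c|) / a) => s sS.
have bc0 : 0 <= `|b| + `|c| by rewrite addr_ge0.
have q0 : 0 <= (`|b| + `|c|) / a by rewrite divr_ge0 // ltW.
have as_gt : `|b| + `|c| < a * s.
  by rewrite mulrC -ltr_pdivrMr //; lra.
have : b * s + c <= (`|b| + `|c|) * s.
  have := ler_norm b; have := ler_norm c; have := normr_ge0 c; nra.
nra.
Qed.

Lemma ratio_lower_bound (s I2 C1 J K R0 w Q0 : R) : 0 <= R0 -> 0 <= w <= 1 ->
  s * K + R0 * `|C1| < s ^+ 2 * (J - w * R0 * I2) -> s ^+ 2 * J - s * K <= Q0 ->
  w * (R0 * (s ^+ 2 * I2 + C1)) < Q0.
Proof.
move=> R00 /andP[w0 w1] hs hQ.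
have : w * (R0 * C1) <= w * (R0 * `|C1|) by rewrite !ler_wpM2l // ler_norm.
have := mulr_ge0 R00 (normr_ge0 C1).
nra.
Qed.

Lemma blowup_quadrature (A B c del : R) : 0 < c -> c < 1 ->
  c <= A <= c + del -> 0 <= B <= del -> del <= 1 -> del <= (1 - c) / 4 ->
  let zl := 2 * c / (c ^+ 2 + 1) in
  del * (2 + 1 / c) <= (1 - zl) / 2 ->
  let a := 1 / 2 + denom_root A B / 2 in
  [/\ 0 < A ^+ 2 + 2 * B - B ^+ 2, A + B < 1,
      denom_root A B <= zl + del * (2 + 1 / c),
      (@lebesgue_measure R).-integrable `[a, 1] (fun z => (1 / denom A B z)%:E)
    & \int[@lebesgue_measure R]_(z in `[a, 1]) (1 / denom A B z)
        <= 32 / (1 - zl) ^+ 2].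
Proof.
move=> c0 c1 hA hB d1 dc zl dzl a.
have [disc z0_le] := denom_root_le_perturbed c0 hA hB d1.
rewrite -/zl in z0_le.
move: hA hB => /andP[cA Ac] /andP[B0 Bd].
have AB : A + B < 1 by lra.
have zl1 : zl < 1 by rewrite /zl ltr_pdivrMr; nra.
have z01 : denom_root A B < 1 by lra.
have [gint gle] := denom_inv_integrable_le (ltW (lt_le_trans c0 cA)) B0 AB disc z01.
split => //; apply: le_trans gle _.
have h : (1 - zl) / 2 <= 1 - denom_root A B by lra.
have h2 : ((1 - zl) / 2) ^+ 2 <= (1 - denom_root A B) ^+ 2.
  by rewrite ler_sqr ?nnegrE; lra.
have p0 : 0 < ((1 - zl) / 2) ^+ 2 by rewrite exprn_gt0 //; lra.
have -> : 32 / (1 - zl) ^+ 2 = 8 / ((1 - zl) / 2) ^+ 2.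
  by field; apply/eqP; lra.
by rewrite ler_pM2l // lef_pV2 ?posrE // (lt_le_trans p0).
Qed.

Lemma blowup_conditions_at (b k c R0 Rb del E Q0 : R) :
  0 < b -> 0 < k -> 0 < c -> c < 1 -> 0 < R0 -> 0 < Rb ->
  0 < del -> del <= 1 -> del <= (1 - c) / 4 ->
  let zl := 2 * c / (c ^+ 2 + 1) in
  del * (2 + 1 / c) <= (1 - zl) / 2 ->
  32 / (1 - zl) ^+ 2 < ln (Rb / R0) ->
  (3 * b + k) * Rb ^+ 3 <= del * E ->
  (1 / 2 + zl / 2 + del * (2 + 1 / c) / 2) * (R0 * (E + b * R0 ^+ 3)) < Q0 ->
  let A := c * (1 + 3 * b * Rb ^+ 3 / (E + b * Rb ^+ 3)) in
  let B := k * Rb ^+ 3 / (E + b * Rb ^+ 3) in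
  let z0 := (A * (1 - B) + Num.sqrt (A ^+ 2 + 2 * B - B ^+ 2)) / (A ^+ 2 + 1) in
  let g := fun z : R => 1 / (1 - Num.sqrt (1 - z ^+ 2) - A * z - B) in
  [/\ 0 < A ^+ 2 + 2 * B - B ^+ 2,
      A + B < 1,
      z0 < 1,
      (@lebesgue_measure R).-integrable `[1 / 2 + z0 / 2, 1]%classic
         (fun z => (g z)%:E)
      /\ \int[@lebesgue_measure R]_(z in `[1 / 2 + z0 / 2, 1]%classic) g z
         < ln (Rb / R0)
    & Q0 / (R0 * (E + b * R0 ^+ 3)) > z0 / 2 + 1 / 2].
Proof.
move=> b0 k0 c0 c1 R00 Rb0 del0 del1 delc zl delzl hln TE hQ A B z0 g.
have [hA hB] : c <= A <= c + del /\ 0 <= B <= del :=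
  coefs_near_limit b0 k0 c0 (ltW c1) Rb0 del0 TE.
have [disc AB z0_le gint gle] :=
  blowup_quadrature (A := A) (B := B) c0 c1 hA hB del1 delc delzl.
have z0E : denom_root A B = z0 by [].
rewrite z0E -/zl in z0_le.
have zl1 : zl < 1 by rewrite /zl ltr_pdivrMr; nra.
have z01 : z0 < 1 by lra.
split => //; first by split => //; exact: le_lt_trans gle hln.
have V0 : 0 < R0 * (E + b * R0 ^+ 3).
  have : 0 < (3 * b + k) * Rb ^+ 3 by rewrite mulr_gt0 ?exprn_gt0 //; lra.
  have : 0 < b * R0 ^+ 3 by rewrite mulr_gt0 ?exprn_gt0.
  by move=> *; rewrite mulr_gt0 //; nra.
rewrite ltr_pdivlMr //; apply: le_lt_trans hQ.
by rewrite ler_pM2r //; lra.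
Qed.

Lemma exists_small_margin (c zl L R0 I2 J : R) :
  c < 1 -> zl < 1 -> 0 < L -> 0 < R0 -> 0 < I2 -> R0 * (1 / 2 + zl / 2) * I2 < J ->
  exists del : R,
    [/\ 0 < del, del <= 1, del <= (1 - c) / 4, del * L <= (1 - zl) / 2 &
         (1 / 2 + zl / 2 + del * L / 2) * R0 * I2 < J].
Proof.
move=> c1 zl1 L0 R00 I20 hJ.
set gam := J - R0 * (1 / 2 + zl / 2) * I2.
have gam0 : 0 < gam by rewrite /gam; lra.
have LRI : 0 < L * R0 * I2 by rewrite !mulr_gt0.
pose d := Num.min (Num.min 1 ((1 - c) / 4))
                  (Num.min ((1 - zl) / 2 / L) (gam / (L * R0 * I2))).
have [d1 dc dzl dg] : [/\ d <= 1, d <= (1 - c) / 4, d <= (1 - zl) / 2 / L &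
                         d <= gam / (L * R0 * I2)] by rewrite /d !ge_min !lexx !orbT.
have d0 : 0 < d by rewrite /d !lt_min ltr01 !divr_gt0 //; lra.
exists d; split => //; first by rewrite -ler_pdivlMr.
move: dg; rewrite ler_pdivlMr // => dg.
have -> : (1 / 2 + zl / 2 + d * L / 2) * R0 * I2 =
          R0 * (1 / 2 + zl / 2) * I2 + d * (L * R0 * I2) / 2 by ring.
by rewrite /gam in dg gam0 *; lra.
Qed.

Lemma blowup_conditions (b k c R0 I2 J C0 K : R) :
  0 < b -> 0 < k -> 0 < c -> c < 1 -> 0 < R0 -> J <= R0 * I2 ->
  R0 * ((c + 1) ^+ 2 / (2 * (c ^+ 2 + 1))) * I2 < J ->
  exists Rbar : R, R0 < Rbar /\
  exists S : R, forall sigma : R, 0 < sigma -> S < sigma ->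
  forall E Q0 : R, E = sigma ^+ 2 * I2 + C0 -> sigma ^+ 2 * J - sigma * K <= Q0 ->
    let A := c * (1 + 3 * b * Rbar ^+ 3 / (E + b * Rbar ^+ 3)) in
    let B := k * Rbar ^+ 3 / (E + b * Rbar ^+ 3) in
    let z0 := (A * (1 - B) + Num.sqrt (A ^+ 2 + 2 * B - B ^+ 2)) / (A ^+ 2 + 1) in
    let g := fun z : R => 1 / (1 - Num.sqrt (1 - z ^+ 2) - A * z - B) in
    [/\ 0 < A ^+ 2 + 2 * B - B ^+ 2,
        A + B < 1,
        z0 < 1,
        (@lebesgue_measure R).-integrable `[1 / 2 + z0 / 2, 1]%classic
           (fun z => (g z)%:E)
        /\ \int[@lebesgue_measure R]_(z in `[1 / 2 + z0 / 2, 1]%classic) g z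
           < ln (Rbar / R0)
      & Q0 / (R0 * (E + b * R0 ^+ 3)) > z0 / 2 + 1 / 2].
Proof.
move=> b0 k0 c0 c1 R00 JI2.
(* [zl] is the limit of [z0] as [sigma -> oo], where [A -> c] and [B -> 0] *)
set zl := 2 * c / (c ^+ 2 + 1).
have c21 : 0 < c ^+ 2 + 1 by nra.
have zl1 : zl < 1 by rewrite /zl ltr_pdivrMr; nra.
have -> : (c + 1) ^+ 2 / (2 * (c ^+ 2 + 1)) = 1 / 2 + zl / 2.
  by rewrite /zl; field; apply/eqP; nra.
move=> hJ; have I20 : 0 < I2.
  rewrite -(pmulr_rgt0 _ R00); have : 0 <= zl by rewrite divr_ge0 //; lra.
  nra.
set L := 2 + 1 / c.
have L0 : 0 < L by rewrite /L; have := divr_gt0 ltr01 c0; lra.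
have [del [del0 del1 delc delzl hw]] := exists_small_margin c1 zl1 L0 R00 I20 hJ.
set wbar := 1 / 2 + zl / 2 + del * L / 2.
have wbar01 : 0 <= wbar <= 1.
  have : 0 <= zl by rewrite /zl divr_ge0 //; lra.
  have := mulr_ge0 (ltW del0) (ltW L0).
  by rewrite /wbar => dL zl0; apply/andP; split; lra.
set M := 32 / (1 - zl) ^+ 2.
set Rb := R0 * expR (M + 1).
have Rb0 : 0 < Rb by rewrite mulr_gt0 // expR_gt0.
have lnRb : M < ln (Rb / R0) by rewrite /Rb [R0 * _]mulrC mulfK ?gt_eqF // expRK ltrDl.
have M0 : 0 < M by rewrite divr_gt0 // exprn_gt0; lra.
exists Rb; split; first by rewrite /Rb ltr_pMr // expR_gt1; lra.
set T := (3 * b + k) * Rb ^+ 3.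
have [S1 HS1] := quadratic_eventually_gt 0 (T / del - C0) I20.
have [S2 HS2] := quadratic_eventually_gt K (R0 * `|C0 + b * R0 ^+ 3|)
  (ltac:(by rewrite subr_gt0) : 0 < J - wbar * R0 * I2).
exists (Num.max S1 S2) => s s0; rewrite gt_max => /andP[/HS1 sS1 /HS2 sS2].
move=> E Q0 EE QQ.
have TE : T <= del * E.
  rewrite -[T](mulfVK (lt0r_neq0 del0)) mulrC ler_pM2l //.
  by rewrite EE; apply: ltW; lra.
apply: (blowup_conditions_at (del := del)) => //; rewrite -/zl -/L -/wbar -/M //.
have -> : E + b * R0 ^+ 3 = s ^+ 2 * I2 + (C0 + b * R0 ^+ 3) by rewrite EE; ring.
apply: ratio_lower_bound QQ => //; first exact: ltW.
by rewrite [s * K]mulrC [s ^+ 2 * _]mulrC.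
Qed.

End Asymptotics.

Section Euclid3.
Variable R : realType.
Implicit Types (x v : R3 R) (s r : R).

Lemma scale3E s v : s *: v = ((s * v.1.1, s * v.1.2), s * v.2).
Proof. by []. Qed.

Lemma dot3Zr x v s : dot3 x (s *: v) = s * dot3 x v.
Proof. by rewrite scale3E /dot3 /=; ring. Qed.

Lemma dot3_ge0 v : 0 <= dot3 v v.
Proof. by rewrite /dot3 !addr_ge0 // -expr2 sqr_ge0. Qed.

Lemma enorm3_ge0 v : 0 <= enorm3 v.
Proof. exact: sqrtr_ge0. Qed.

Lemma enorm3_sqr v : enorm3 v ^+ 2 = dot3 v v.
Proof. by rewrite sqr_sqrtr // dot3_ge0. Qed.

Lemma enorm3Z s v : enorm3 (s *: v) = `|s| * enorm3 v.
Proof.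
rewrite /enorm3 -sqrtr_sqr -sqrtrM ?sqr_ge0 //; congr Num.sqrt.
by rewrite scale3E /dot3 /=; ring.
Qed.

Lemma abs_dot3_le x v : `|dot3 x v| <= enorm3 x * enorm3 v.
Proof.
have lagrange : dot3 x v ^+ 2 <= (enorm3 x * enorm3 v) ^+ 2.
  rewrite exprMn !enorm3_sqr /dot3 -subr_ge0.
  set a := (X in 0 <= X).
  have -> : a = (x.1.1 * v.1.2 - x.1.2 * v.1.1) ^+ 2 +
                (x.1.1 * v.2 - x.2 * v.1.1) ^+ 2 +
                (x.1.2 * v.2 - x.2 * v.1.2) ^+ 2 by rewrite /a; ring.
  by rewrite !addr_ge0 // sqr_ge0.
rewrite -ler_sqr ?nnegrE ?mulr_ge0 ?enorm3_ge0 //.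
by rewrite real_normK ?num_real.
Qed.

Lemma abs_coord3_le x :
  [/\ `|x.1.1| <= enorm3 x, `|x.1.2| <= enorm3 x & `|x.2| <= enorm3 x].
Proof.
rewrite /enorm3 /dot3 -!sqrtr_sqr.
have := sqr_ge0 x.1.1; have := sqr_ge0 x.1.2; have := sqr_ge0 x.2.
by rewrite !expr2 => *; split; rewrite ler_sqrt; lra.
Qed.

Definition cube3 r : set (R3 R) := `[- r, r] `*` `[- r, r] `*` `[- r, r].

Lemma compact_cube3 r : compact (cube3 r).
Proof. by apply: compact_setX; [apply: compact_setX|]; exact: segment_compact. Qed.

Lemma ball3_sub_cube3 r : ball3 r `<=` cube3 r.
Proof.
move=> x; rewrite /ball3 /cube3 /= !in_itv /=.
have [h1 h2 h3] := abs_coord3_le x => hx.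
by rewrite -!ler_norml; split; [split|]; lra.
Qed.

Lemma continuous_coord3 : [/\ continuous (fun p : R3 R => p.1.1),
  continuous (fun p : R3 R => p.1.2) & continuous (fun p : R3 R => p.2)].
Proof.
have cfst (U V : topologicalType) : continuous (@fst U V) by case=> ? ?; exact: cvg_fst.
have csnd (U V : topologicalType) : continuous (@snd U V) by case=> ? ?; exact: cvg_snd.
split=> p; [exact: continuous_comp (cfst _ _ _) (cfst _ _ _) |
            exact: continuous_comp (cfst _ _ _) (csnd _ _ _) | exact: csnd].
Qed.

End Euclid3.

Section Continuity3.
Variables (R : realType) (T : topologicalType).
Implicit Types (f g : T -> R3 R).

Lemma continuous_dot3 f g : continuous f -> continuous g ->
  continuous (fun t => dot3 (f t) (g t)).
Proof.
move=> cf cg t; have [c11 c12 c2] := continuous_coord3 R.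
have comp (h : T -> R3 R) (pi : R3 R -> R) : continuous h -> continuous pi ->
    {for t, continuous (fun y => pi (h y))}.
  by move=> ch cpi; exact: continuous_comp (ch t) (cpi (h t)).
apply: cvgD; [apply: cvgD|]; apply: cvgM.
- exact: (comp f (fun p => p.1.1)).
- exact: (comp g (fun p => p.1.1)).
- exact: (comp f (fun p => p.1.2)).
- exact: (comp g (fun p => p.1.2)).
- exact: (comp f (fun p => p.2)).
- exact: (comp g (fun p => p.2)).
Qed.

Lemma continuous_enorm3 f : continuous f -> continuous (fun t => enorm3 (f t)).
Proof.
by move=> cf t; exact: continuous_comp (@continuous_dot3 f f cf cf t) (@sqrt_continuous R _).
Qed.

End Continuity3.

Lemma supported_in_bounded (R : realType) (u : R3 R -> R3 R) (r : R) :
  continuous u -> supported_in u (ball3 r) -> exists M, forall x, enorm3 (u x) <= M.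
Proof.
move=> uc us.
have /compact_bounded[M [_ HM]] := continuous_compact
  (continuous_subspaceT (continuous_enorm3 uc)) (compact_cube3 (r := r)).
exists (`|M| + 1) => x.
have [/ball3_sub_cube3 cx|bx] := pselect (ball3 r x).
  rewrite -[enorm3 _]ger0_norm ?enorm3_ge0 //.
  by apply: HM; [have := ler_norm M; lra | exists x].
have -> : u x = 0.
  by apply/eqP/negbNE/negP => ux; apply/bx/us/subset_closure.
by rewrite /enorm3 /dot3 /= !mul0r !add0r sqrtr0; have := normr_ge0 M; lra.
Qed.

Notation R3m R := (measurableTypeR R * measurableTypeR R * measurableTypeR R)%type.

Section Borel3.
Variable R : realType.

Definition box3 (q1 q2 q3 r : R) : set (R3 R) :=
  `]q1 - r, q1 + r[ `*` `]q2 - r, q2 + r[ `*` `]q3 - r, q3 + r[.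

Lemma measurable_box3 q1 q2 q3 r : measurable (box3 q1 q2 q3 r : set (R3m R)).
Proof. by apply: measurableX; [apply: measurableX|]; exact: measurable_itv. Qed.

(* [U] is the countable union of the boxes with rational centre and radius
   that it contains. *)
Lemma open_measurable3 (U : set (R3 R)) : open U -> measurable (U : set (R3m R)).
Proof.
move=> oU.
pose inU (q1 q2 q3 r : rat) :=
  let B := box3 (ratr q1) (ratr q2) (ratr q3) (ratr r) in
  if pselect (B `<=` U) then B else set0.
have -> : U = \bigcup_q1 \bigcup_q2 \bigcup_q3 \bigcup_r inU q1 q2 q3 r.
  apply/seteqP; split; last first.
    by move=> x [q1 _ [q2 _ [q3 _ [r _]]]]; rewrite /inU; case: pselect => // sub /sub.
  move=> x Ux.
  have : nbhs x U by rewrite nbhsE /=; exists U.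
  rewrite -nbhs_ballE => -[e e0 xeU].
  have [r] : exists r : rat, ratr r \in `]0, e / 2[ by apply: rat_in_itvoo; rewrite divr_gt0.
  rewrite in_itv /= => /andP[r0 re].
  have near_rat (y : R) : exists q : rat, y - ratr r < ratr q < y + ratr r.
    have /rat_in_itvoo[q] : y - ratr r < y + ratr r by lra.
    by rewrite in_itv /=; exists q.
  have [q1 /andP[a1 b1]] := near_rat x.1.1.
  have [q2 /andP[a2 b2]] := near_rat x.1.2.
  have [q3 /andP[a3 b3]] := near_rat x.2.
  exists q1 => //; exists q2 => //; exists q3 => //; exists r => //.
  rewrite /inU; case: pselect => [?|nsub].
    by rewrite /box3 /= !in_itv /=; split; [split|]; apply/andP; split; lra.
  exfalso; apply: nsub => y.
  rewrite /box3 /= !in_itv /= => -[[/andP[c1 d1] /andP[c2 d2]] /andP[c3 d3]].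
  apply: xeU; rewrite /ball /= /prod_ball /= /ball /=.
  by split; [rewrite /prod_ball /ball /=; split|];
    rewrite ?/ball_ /= ltr_norml; apply/andP; split; lra.
do 4 apply: bigcupT_measurable_rat => ?.
by rewrite /inU; case: pselect => ?; [exact: measurable_box3 | exact: measurable0].
Qed.

Lemma continuous_measurable_fun3 (f : R3 R -> R) :
  continuous f -> measurable_fun (setT : set (R3m R)) f.
Proof.
move=> /continuousP cf.
apply: (measurability _ (measurable_realfun.RGenOpens.measurableE R)).
move=> _ [_ [a [b ->] <-]]; rewrite setTI.
by apply: open_measurable3; apply: cf; exact: interval_open.
Qed.

Lemma measurable_ball3 (r : R) : measurable (ball3 r : set (R3m R)).
Proof.
have /continuous_measurable_fun3 m := continuous_enorm3 (fun x : R3 R => cvg_id).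
have := m measurableT _ (measurable_itv `]-oo, r[); rewrite setTI.
by congr measurable; apply/seteqP; split => x /=; rewrite in_itv.
Qed.

Lemma ball3_lty (r : R) : (leb3 R (ball3 r) < +oo)%E.
Proof.
pose I : set R := `[- r, r]%classic.
have mI : measurable I by exact: measurable_itv.
apply: (@le_lt_trans _ _ (leb3 R (cube3 r))).
  apply: le_measure; rewrite ?inE; [exact: measurable_ball3 | | exact: ball3_sub_cube3].
  by apply: measurableX; [apply: measurableX|].
rewrite /leb3 /cube3 -/I product_measure1E //; last exact: measurableX.
set X := (X in (X * _)%E); set Y := (X in (_ * X)%E).
have -> : X = (lebesgue_measure I * lebesgue_measure I)%E by exact: product_measure1E.
have -> : Y = lebesgue_measure I by [].
rewrite /I lebesgue_measure_itv /=.
by case: ifP => _; rewrite ?mul0e -?EFinD -?EFinM ?ltry.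
Qed.

End Borel3.

Lemma sqrt1Dsqr_between (R : realType) (y : R) : 0 <= y ->
  y <= Num.sqrt (1 + y ^+ 2) <= y + 1.
Proof.
move=> y0; have q0 := sqrtr_ge0 (1 + y ^+ 2).
have q2 : Num.sqrt (1 + y ^+ 2) ^+ 2 = 1 + y ^+ 2 by rewrite sqr_sqrtr // addr_ge0 ?sqr_ge0.
by apply/andP; split; nra.
Qed.

Lemma relativistic_momentum_ge (R : realType) (s d e K : R) :
  0 < s -> 0 <= e -> `|d| <= K ->
  s ^+ 2 * (d * e) - s * K <= s * d * Num.sqrt (1 + (s * e) ^+ 2).
Proof.
move=> s0 e0 dK; have se0 : 0 <= s * e by rewrite mulr_ge0 // ltW.
have /andP[q_ge q_le] := sqrt1Dsqr_between se0.
set q := Num.sqrt _ in q_ge q_le *.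
have : - K <= d * (q - s * e).
  move: dK; rewrite ler_norml => /andP[dl du]; nra.
nra.
Qed.

Section WeightedIntegrals.
Variables (R : realType) (r : R) (w : R3 R -> R).
Hypotheses (w_gt0 : forall x, 0 < w x)
  (w_int : (leb3 R).-integrable (ball3 r) (fun x => (w x)%:E)).

Let mball : measurable (ball3 r : set (R3m R)) := measurable_ball3 r.

Lemma integrable_mulw (f : R3 R -> R) (K : R) : continuous f ->
  (forall x, ball3 r x -> `|f x| <= K) ->
  (leb3 R).-integrable (ball3 r) (fun x => (f x * w x)%:E).
Proof.
move=> fc fK.
have mf : measurable_fun (ball3 r : set (R3m R)) f :=
  measurable_funTS (continuous_measurable_fun3 fc).
have fb : [bounded f x | x in ball3 r].
  by exists K; split => [|N KN x /fK fxK /=]; [exact: num_real | lra].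
have := integrableMr mball mf fb w_int.
by apply: eq_integrable.
Qed.

Variables (u : R3 R -> R3 R) (M : R).
Hypotheses (u_cont : continuous u) (u_le : forall x, enorm3 (u x) <= M).

Lemma dot3_ball_le x : ball3 r x -> `|dot3 x (u x)| <= r * M.
Proof.
move=> xr; apply: le_trans (abs_dot3_le _ _) _.
by apply: ler_pM; rewrite ?enorm3_ge0 ?u_le // ltW.
Qed.

Lemma integrable_energy_density :
  (leb3 R).-integrable (ball3 r) (fun x => (enorm3 (u x) ^+ 2 * w x)%:E).
Proof.
apply: (integrable_mulw (f := fun x => enorm3 (u x) ^+ 2) (K := M ^+ 2)).
  by move=> x; have ce := @continuous_enorm3 R _ u u_cont x; exact: (continuousM ce ce).
move=> x _; rewrite ger0_norm ?sqr_ge0 // ler_sqr ?nnegrE ?u_le ?enorm3_ge0 //.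
exact: le_trans (enorm3_ge0 _) (u_le x).
Qed.

Let continuous_dot3_id : continuous (fun x => dot3 x (u x)).
Proof. exact: continuous_dot3 (fun x => cvg_id) u_cont. Qed.

Lemma integrable_momentum_density :
  (leb3 R).-integrable (ball3 r) (fun x => (dot3 x (u x) * enorm3 (u x) * w x)%:E).
Proof.
apply: (integrable_mulw (f := fun x => dot3 x (u x) * enorm3 (u x)) (K := r * M * M)).
  move=> x; have cd := @continuous_dot3_id x.
  by have ce := @continuous_enorm3 R _ u u_cont x; exact: (continuousM cd ce).
move=> x xr; rewrite normrM [`|enorm3 _|]ger0_norm ?enorm3_ge0 //.
by apply: ler_pM; rewrite ?normr_ge0 ?enorm3_ge0 // dot3_ball_le.
Qed.

Lemma momentum_le_energy :
  \int[leb3 R]_(x in ball3 r) (dot3 x (u x) * enorm3 (u x) * w x)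
    <= r * \int[leb3 R]_(x in ball3 r) (enorm3 (u x) ^+ 2 * w x).
Proof.
rewrite -RintegralZl //; last exact: integrable_energy_density.
apply: le_Rintegral => //; first exact: integrable_momentum_density.
  have := integrableZl mball r integrable_energy_density.
  by apply: eq_integrable.
move=> x xr; rewrite mulrA (ler_pM2r (w_gt0 x)) expr2 mulrA.
apply: ler_wpM2r; first exact: enorm3_ge0.
apply: le_trans (ler_norm _) (le_trans (abs_dot3_le _ _) _).
by apply: ler_wpM2r; [exact: enorm3_ge0 | exact: ltW].
Qed.

Lemma Rintegral_energy_scaled (f : R3 R -> R) (a s : R) :
  (leb3 R).-integrable (ball3 r) (fun x => (f x)%:E) ->
  \int[leb3 R]_(x in ball3 r) (w x * enorm3 (s *: u x) ^+ 2 + f x - a) =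
  s ^+ 2 * \int[leb3 R]_(x in ball3 r) (enorm3 (u x) ^+ 2 * w x) +
  \int[leb3 R]_(x in ball3 r) (f x - a).
Proof.
move=> f_int.
have a_int : (leb3 R).-integrable (ball3 r) (EFin \o cst a).
  apply: (measurable_bounded_integrable mball (ball3_lty r) (measurable_cst a)).
  by exists `|a|; split => [|N aN x _ /=]; [exact: num_real | lra].
have fa_int : (leb3 R).-integrable (ball3 r) (fun x => (f x - a)%:E).
  by have := integrableB mball f_int a_int; apply: eq_integrable.
have e_int : (leb3 R).-integrable (ball3 r)
    (fun x => (s ^+ 2 * (enorm3 (u x) ^+ 2 * w x))%:E).
  by have := integrableZl mball (s ^+ 2) integrable_energy_density; apply: eq_integrable.
rewrite -RintegralZl //; last exact: integrable_energy_density.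
rewrite -RintegralD //; apply: eq_Rintegral => x _.
by rewrite enorm3Z exprMn real_normK ?num_real //; ring.
Qed.

Lemma Rintegral_momentum_scaled_ge (s : R) : 0 < s ->
  s ^+ 2 * \int[leb3 R]_(x in ball3 r) (dot3 x (u x) * enorm3 (u x) * w x)
    - s * (r * M * \int[leb3 R]_(x in ball3 r) w x)
  <= \int[leb3 R]_(x in ball3 r)
       (dot3 x (s *: u x) * Num.sqrt (1 + enorm3 (s *: u x) ^+ 2) * w x).
Proof.
move=> s0.
pose q x := s * dot3 x (u x) * Num.sqrt (1 + (s * enorm3 (u x)) ^+ 2).
have qE x : dot3 x (s *: u x) * Num.sqrt (1 + enorm3 (s *: u x) ^+ 2) = q x.
  by rewrite /q dot3Zr enorm3Z gtr0_norm.
have q_int : (leb3 R).-integrable (ball3 r) (fun x => (q x * w x)%:E).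
  apply: (integrable_mulw (f := q) (K := s * (r * M) * (s * M + 1))).
    move=> x; have cd := @continuous_dot3_id x.
    have ce := @continuous_enorm3 R _ u u_cont x.
    have cs : {for x, continuous (fun=> s)} by exact: cvg_cst.
    have c1 : {for x, continuous (fun=> 1 : R)} by exact: cvg_cst.
    have cse := continuousM cs ce.
    exact: (continuousM (continuousM cs cd)
      (continuous_comp (cvgD c1 (continuousM cse cse)) (@sqrt_continuous R _))).
  move=> x xr; rewrite /q !normrM (gtr0_norm s0) [`|Num.sqrt _|]ger0_norm ?sqrtr_ge0 //.
  rewrite -mulrA -[s * (r * M) * _]mulrA ler_pM2l //.
  apply: ler_pM; rewrite ?normr_ge0 ?sqrtr_ge0 ?dot3_ball_le //.
  have /andP[_ q_le] := sqrt1Dsqr_between (mulr_ge0 (ltW s0) (enorm3_ge0 (u x))).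
  by apply: le_trans q_le _; rewrite lerD2r ler_pM2l ?u_le.
have -> : \int[leb3 R]_(x in ball3 r)
    (dot3 x (s *: u x) * Num.sqrt (1 + enorm3 (s *: u x) ^+ 2) * w x) =
    \int[leb3 R]_(x in ball3 r) (q x * w x).
  by apply: eq_Rintegral => x _; rewrite qE.
rewrite mulrA -!RintegralZl //; [|exact: integrable_momentum_density].
rewrite -RintegralB //.
- apply: le_Rintegral => //.
  + have := integrableB mball (integrableZl mball (s ^+ 2) integrable_momentum_density)
      (integrableZl mball (s * (r * M)) w_int).
    by apply: eq_integrable.
  + move=> x xr; have := ler_wpM2r (ltW (w_gt0 x))
      (relativistic_momentum_ge s0 (enorm3_ge0 (u x)) (dot3_ball_le xr)).
    by rewrite /q mulrBl -!mulrA.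
- by have := integrableZl mball (s ^+ 2) integrable_momentum_density; apply: eq_integrable.
- by have := integrableZl mball (s * (r * M)) w_int; apply: eq_integrable.
Qed.

End WeightedIntegrals.

Theorem mainTheorem11 (R : realType) (p : R -> R -> R)
  (b k c R0 rhobar : R)
  (hb : 0 < b) (hk : 0 < k) (hc0 : 0 < c) (hc1 : c < 1)
  (hR0 : 0 < R0) (hrhobar : 0 < rhobar)
  (rho n Pi : R3 R -> R) (u1 : R3 R -> R3 R)
  (hpos : forall x, 0 < rho x + p (rho x) (n x) + Pi x)
  (hwint : (leb3 R).-integrable (ball3 R0)
             (fun x => (rho x + p (rho x) (n x) + Pi x)%:E))
  (hrhoint : (leb3 R).-integrable (ball3 R0) (fun x => (rho x)%:E))
  (hsmooth : smooth u1)
  (hsupp : supported_in u1 (ball3 R0))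
  (hineq :
     Rintegral (leb3 R) (ball3 R0)
       (fun x => dot3 x (u1 x) * enorm3 (u1 x)
                 * (rho x + p (rho x) (n x) + Pi x))
     > R0 * ((c + 1) ^+ 2 / (2 * (c ^+ 2 + 1)))
       * Rintegral (leb3 R) (ball3 R0)
           (fun x => enorm3 (u1 x) ^+ 2 * (rho x + p (rho x) (n x) + Pi x))) :
  exists Rbar : R, R0 < Rbar /\
  exists S : R, forall sigma : R, 0 < sigma -> S < sigma ->
    let E := Rintegral (leb3 R) (ball3 R0)
               (fun x => (rho x + p (rho x) (n x) + Pi x)
                           * enorm3 (sigma *: u1 x) ^+ 2
                         + rho x - rhobar) in
    let Q0 := Rintegral (leb3 R) (ball3 R0)
               (fun x => dot3 x (sigma *: u1 x)
                         * Num.sqrt (1 + enorm3 (sigma *: u1 x) ^+ 2)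
                         * (rho x + p (rho x) (n x) + Pi x)) in
    let A := c * (1 + 3 * b * Rbar ^+ 3 / (E + b * Rbar ^+ 3)) in
    let B := k * Rbar ^+ 3 / (E + b * Rbar ^+ 3) in
    let z0 := (A * (1 - B) + Num.sqrt (A ^+ 2 + 2 * B - B ^+ 2)) / (A ^+ 2 + 1) in
    let g := fun z : R => 1 / (1 - Num.sqrt (1 - z ^+ 2) - A * z - B) in
    [/\ 0 < A ^+ 2 + 2 * B - B ^+ 2,
        A + B < 1,
        z0 < 1,
        (@lebesgue_measure R).-integrable `[1 / 2 + z0 / 2, 1]%classic
           (fun z => (g z)%:E)
        /\ Rintegral (@lebesgue_measure R) `[1 / 2 + z0 / 2, 1]%classic g
           < ln (Rbar / R0)
      & Q0 / (R0 * (E + b * R0 ^+ 3)) > z0 / 2 + 1 / 2].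
Proof.
have u1_cont : continuous u1 := fun x => differentiable_continuous (hsmooth [::] x).
have [M u1_le] := supported_in_bounded u1_cont hsupp.
have := blowup_conditions
  (\int[leb3 R]_(x in ball3 R0) (rho x - rhobar))
  (R0 * M * \int[leb3 R]_(x in ball3 R0) (rho x + p (rho x) (n x) + Pi x))
  hb hk hc0 hc1 hR0 (momentum_le_energy hpos hwint u1_cont u1_le) hineq.
move=> [Rbar [R0_lt_Rbar [S HS]]]; exists Rbar; split => //; exists S.
move=> sigma sigma_gt0 S_lt_sigma E Q0; apply: (HS sigma sigma_gt0 S_lt_sigma E Q0).
- exact (Rintegral_energy_scaled hwint u1_cont u1_le _ _ hrhoint).
- exact (Rintegral_momentum_scaled_ge hpos hwint u1_cont u1_le sigma_gt0).
Qed.
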